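(* The category of regular E-systems is isomorphic to the category of crossed bimodules over rings. Explicitly: to a regular E-system $(B,D,d,\theta)$ assign the crossed bimodule $(B,D,d)$ where the additive group $B$ is a $D$-bimodule via $xb=\theta_x b$, $bx=b\theta_x$; conversely to a crossed bimodule $(B,D,d)$ assign the E-system $(B,D,d,\theta)$ where $B$ carries the multiplication $b\ast b'=d(b)b'=b\,d(b')$ and $\theta_x b=xb$, $b\theta_x=bx$; on morphisms both assignments are the identity on pairs $(f_1,f_0)$. These assignments are mutually inverse functors, bijective on objects and on morphisms.
   Context: Bimultiplications: for a ring $A$, a bimultiplication $\sigma$ is a pair of additive maps $a\mapsto\sigma a$, $a\mapsto a\sigma$ with $\sigma(ab)=(\sigma a)b$, $(ab)\sigma=a(b\sigma)$, $a(\sigma b)=(a\sigma)b$; they form the ring $M_A$; $\mu_c$ denotes the inner bimultiplication $\mu_c a=ca$, $a\mu_c=ac$. Two bimultiplications $\sigma,\tau$ are permutable if $\sigma(a\tau)=(\sigma a)\tau$ and $\tau(a\sigma)=(\tau a)\sigma$ for all $a\in A$. An E-system is $(B,D,d,\theta)$ with $B$ a ring, $D$ a ring with unit, $d:B\to D$, $\theta:D\to M_B$ ring homomorphisms, $\theta\circ d=\mu$, and $d(\theta_x b)=x\,d(b)$, $d(b\theta_x)=d(b)x$. It is regular if $\theta(1)=1$ and any two elements of $\theta(D)$ are permutable. A morphism of E-systems $(f_1,f_0):(B,D,d,\theta)\to(B',D',d',\theta')$ is a pair of ring homomorphisms $f_1:B\to B'$, $f_0:D\to D'$ with $f_0d=d'f_1$,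 $f_1(\theta_x b)=\theta'_{f_0(x)}f_1(b)$, $f_1(b\theta_x)=f_1(b)\theta'_{f_0(x)}$. A crossed bimodule over rings is a triple $(B,D,d)$ with $D$ a ring with unit, $B$ a (unital) $D$-bimodule, and $d:B\to D$ a homomorphism of $D$-bimodules with $d(b)b'=b\,d(b')$ for all $b,b'\in B$. A morphism $(k_1,k_0):(B,D,d)\to(B',D',d')$ consists of a group homomorphism $k_1:B\to B'$ and a ring homomorphism $k_0:D\to D'$ with $k_0d=d'k_1$, $k_1(xb)=k_0(x)k_1(b)$, $k_1(bx)=k_1(b)k_0(x)$. *)

From HB Require Import structures.
From mathcomp Require Import all_boot all_order all_algebra.
Set Implicit Arguments. Unset Strict Implicit. Unset Printing Implicit Defensive.
Import GRing.Theory.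
Local Open Scope ring_scope.

(* B is a (possibly non-unital) ring,
   given by its additive group es_B and a multiplication es_mul.  The ring homomorphism theta : D -> M_B is given by its two
   components: es_thl x b = theta_x b  and  es_thr x b = b theta_x. *)
Record esys_data := ESysData {
  es_B : zmodType;
  es_mul : es_B -> es_B -> es_B;
  es_D : pzRingType;
  es_d : es_B -> es_D;
  es_thl : es_D -> es_B -> es_B;
  es_thr : es_D -> es_B -> es_B }.

(* Raw data of a crossed bimodule (B, D, d): xb_actl x b = x b and
   xb_actr x b = b x. *)
Record xbim_data := XBimData {
  xb_B : zmodType;
  xb_D : pzRingType;
  xb_d : xb_B -> xb_D;
  xb_actl : xb_D -> xb_B -> xb_B;
  xb_actr : xb_D -> xb_B -> xb_B }.

Definition additive_map (U V : zmodType) (f : U -> V) : Prop :=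
  forall a b, f (a + b) = f a + f b.

Definition is_ring_on (B : zmodType) (mul : B -> B -> B) : Prop :=
  [/\ forall a b c, mul a (mul b c) = mul (mul a b) c,
      forall a b c, mul (a + b) c = mul a c + mul b c &
      forall a b c, mul a (b + c) = mul a b + mul a c].

(* (sl, sr) is a bimultiplication of (B, mul): sl a = sigma a, sr a = a sigma. *)
Definition is_bimult (B : zmodType) (mul : B -> B -> B) (sl sr : B -> B) : Prop :=
  [/\ additive_map sl, additive_map sr,
      forall a b, sl (mul a b) = mul (sl a) b,
      forall a b, sr (mul a b) = mul a (sr b) &
      forall a b, mul a (sl b) = mul (sr a) b].

(* theta = (thl, thr) is a ring homomorphism D -> M_B, where M_B has pointwise
   addition and product (sigma tau) a = sigma (tau a), a (sigma tau) = (a sigma) tau. *)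
Definition is_theta_hom (B : zmodType) (mul : B -> B -> B) (D : pzRingType)
    (thl thr : D -> B -> B) : Prop :=
  [/\ forall x, is_bimult mul (thl x) (thr x),
      forall x y b, thl (x + y) b = thl x b + thl y b,
      forall x y b, thr (x + y) b = thr x b + thr y b,
      forall x y b, thl (x * y) b = thl x (thl y b) &
      forall x y b, thr (x * y) b = thr y (thr x b)].

Definition is_esystem (E : esys_data) : Prop :=
  let: ESysData B mul D d thl thr := E in
  [/\ is_ring_on mul,
      additive_map d /\ (forall a b, d (mul a b) = d a * d b),
      is_theta_hom mul thl thr,
      (forall b a, thl (d b) a = mul b a) /\ (forall b a, thr (d b) a = mul a b) &
      (forall x b, d (thl x b) = x * d b) /\ (forall x b, d (thr x b) = d b * x)].

Definition is_regular_esystem (E : esys_data) : Prop :=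
  [/\ is_esystem E,
      (forall b, @es_thl E 1 b = b) /\ (forall b, @es_thr E 1 b = b) &
      forall x y a, @es_thl E x (@es_thr E y a) = @es_thr E y (@es_thl E x a)].

Definition is_unital_ring_hom (D D' : pzRingType) (f : D -> D') : Prop :=
  [/\ additive_map f, forall x y, f (x * y) = f x * f y & f 1 = 1].

Definition is_esys_morph (E E' : esys_data) (f1 : es_B E -> es_B E')
    (f0 : es_D E -> es_D E') : Prop :=
  [/\ additive_map f1 /\
        (forall a b, f1 (@es_mul E a b) = @es_mul E' (f1 a) (f1 b)),
      is_unital_ring_hom f0,
      forall b, f0 (@es_d E b) = @es_d E' (f1 b),
      forall x b, f1 (@es_thl E x b) = @es_thl E' (f0 x) (f1 b) &
      forall x b, f1 (@es_thr E x b) = @es_thr E' (f0 x) (f1 b)].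

Definition is_crossed_bimodule (X : xbim_data) : Prop :=
  let: XBimData B D d l r := X in
  [/\
      [/\ forall x y b, l (x + y) b = l x b + l y b,
          forall x b b', l x (b + b') = l x b + l x b',
          forall x y b, l (x * y) b = l x (l y b) &
          forall b, l 1 b = b],
      [/\ forall x y b, r (x + y) b = r x b + r y b,
          forall x b b', r x (b + b') = r x b + r x b',
          forall x y b, r (x * y) b = r y (r x b) &
          forall b, r 1 b = b],
      (forall x y b, r y (l x b) = l x (r y b)),
      [/\ additive_map d, forall x b, d (l x b) = x * d b &
          forall x b, d (r x b) = d b * x] &
      forall b b', l (d b) b' = r (d b') b].

Definition is_xbim_morph (X X' : xbim_data) (k1 : xb_B X -> xb_B X')
    (k0 : xb_D X -> xb_D X') : Prop :=
  [/\ additive_map k1,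
      is_unital_ring_hom k0,
      forall b, k0 (@xb_d X b) = @xb_d X' (k1 b),
      forall x b, k1 (@xb_actl X x b) = @xb_actl X' (k0 x) (k1 b) &
      forall x b, k1 (@xb_actr X x b) = @xb_actr X' (k0 x) (k1 b)].

Definition esys_to_xbim (E : esys_data) : xbim_data :=
  XBimData (@es_d E) (@es_thl E) (@es_thr E).

Definition xbim_to_esys (X : xbim_data) : esys_data :=
  @ESysData (xb_B X) (fun b b' => xb_actl (xb_d b) b') (xb_D X)
    (@xb_d X) (@xb_actl X) (@xb_actr X).

From mathcomp Require Import all_boot all_order all_algebra.
From Stdlib Require Import FunctionalExtensionality.
Import GRing.Theory.
Local Open Scope ring_scope.

(* The whole correspondence rests on one observation: in an E-system the
   multiplication of B is recovered from the rest of the data, since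
   theta o d = mu gives  b b' = theta_{d b} b'.  Hence
   - a crossed bimodule (B, D, d) becomes a regular E-system for the product
     b * b' = d(b) b'; the ring axioms and the compatibilities of theta are
     the bimodule axioms read through this product (first section below);
   - a regular E-system yields a crossed bimodule by forgetting the product,
     and the product can be rebuilt from theta and d, so the two assignments
     are mutually inverse on objects;
   - a pair (f1, f0) commuting with d and theta automatically preserves the
     product of B, so E-system morphisms and crossed-bimodule morphisms
     coincide. *)

Definition mul_via_theta_d (E : esys_data) : Prop :=
  forall b a, @es_thl E (@es_d E b) a = @es_mul E b a.

Lemma esystem_mul_via_theta_d (E : esys_data) :
  is_esystem E -> mul_via_theta_d E.
Proof. by case: E => B mul D d thl thr [_ _ _ [thdl _] _]. Qed.

Lemma xbim_to_esys_mul_via_theta_d (X : xbim_data) :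
  mul_via_theta_d (xbim_to_esys X).
Proof. by []. Qed.

Section CrossedBimoduleToESystem.

Variables (B : zmodType) (D : pzRingType) (d : B -> D) (l r : D -> B -> B).
Hypothesis crossedX : is_crossed_bimodule (XBimData d l r).

Let mul (b b' : B) : B := l (d b) b'.

Lemma crossed_d_mul a b : d (mul a b) = d a * d b.
Proof. by case: crossedX => _ _ _ [_ dl _] _; rewrite /mul dl. Qed.

(* Associativity follows from the left action being a module action and d
   being multiplicative; distributivity from biadditivity of the action. *)
Lemma crossed_mul_ring : is_ring_on mul.
Proof.
case: crossedX => [[lDl lDr lM _] _ _ [dadd _ _] _]; split => a b c.
- by rewrite /mul -lM -crossed_d_mul.
- by rewrite /mul dadd lDl.
- by rewrite /mul lDr.
Qed.

Lemma crossed_action_bimult x : is_bimult mul (l x) (r x).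
Proof.
case: crossedX => [[_ lDr lM _] [_ rDr _ _] lr [_ dl dr] dcross].
split => [a b | a b | a b | a b | a b].
- exact: lDr.
- exact: rDr.
- by rewrite /mul dl lM.
- by rewrite /mul lr.
- by rewrite /mul dr lM.
Qed.

Lemma crossed_theta_hom : is_theta_hom mul l r.
Proof.
case: crossedX => [[lDl _ lM _] [rDl _ rM _] _ _ _].
by split; [exact: crossed_action_bimult | exact: lDl | exact: rDl
          | exact: lM | exact: rM].
Qed.

Lemma crossed_regular_esystem : is_regular_esystem (xbim_to_esys (XBimData d l r)).
Proof.
case: crossedX => [[_ _ _ l1] [_ _ _ r1] lr [dadd dl dr] dcross].
split; [split=> /= | by split | by move=> x y a /=; rewrite lr].
- exact: crossed_mul_ring.
- by split; [exact: dadd | exact: crossed_d_mul].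
- exact: crossed_theta_hom.
- by split=> // b a; rewrite dcross.
- by split.
Qed.

End CrossedBimoduleToESystem.

Lemma xbim_to_esys_regular (X : xbim_data) :
  is_crossed_bimodule X -> is_regular_esystem (xbim_to_esys X).
Proof. by case: X => B D d l r; exact: crossed_regular_esystem. Qed.

(* Forgetting the product of a regular E-system gives a crossed bimodule:
   the bimodule axioms are those of the regular theta (permutability gives
   (x b) y = x (b y)), and the crossed condition d(b) b' = b d(b') holds
   because by theta o d = mu both sides equal the product b b'. *)
Lemma esys_to_xbim_crossed (E : esys_data) :
  is_regular_esystem E -> is_crossed_bimodule (esys_to_xbim E).
Proof.
case: E => B mul D d thl thr /=.
case=> [[_ [dadd _] [bim thlD thrD thlM thrM] [thdl thdr] [dthl dthr]] [thl1 thr1] perm].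
have thlDr x : additive_map (thl x) by case: (bim x).
have thrDr x : additive_map (thr x) by case: (bim x).
split; [by split | by split | by move=> x y b; exact: esym (perm x y b) | by split
      | by move=> b b'; rewrite thdl thdr].
Qed.

Lemma xbim_to_esysK (E : esys_data) :
  mul_via_theta_d E -> xbim_to_esys (esys_to_xbim E) = E.
Proof.
case: E => B mul D d thl thr thdl; rewrite /xbim_to_esys /=.
suff -> : (fun b b' => thl (d b) b') = mul by [].
by do 2!(apply: functional_extensionality => ?); exact: thdl.
Qed.

Lemma esys_to_xbimK (X : xbim_data) : esys_to_xbim (xbim_to_esys X) = X.
Proof. by case: X. Qed.

(* Morphisms: a pair commuting with d and theta preserves the product
   f1(b b') = f1(theta_{d b} b') = theta'_{f0 (d b)} f1 b'
            = theta'_{d' (f1 b)} f1 b' = f1 b f1 b',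
   so E-system morphisms are exactly crossed-bimodule morphisms. *)
Lemma esys_morphE (E E' : esys_data) (f1 : es_B E -> es_B E')
    (f0 : es_D E -> es_D E') :
  mul_via_theta_d E -> mul_via_theta_d E' ->
  is_esys_morph f1 f0 <-> @is_xbim_morph (esys_to_xbim E) (esys_to_xbim E') f1 f0.
Proof.
move=> thdE thdE'; split; first by case=> [[f1add _] ? ? ? ?]; split.
case=> f1add f0hom f_d f_thl f_thr; split=> //; split=> // a b.
by rewrite -thdE f_thl f_d; exact: thdE'.
Qed.

(* The same correspondence seen from crossed bimodules: it is esys_morphE
   for E = xbim_to_esys X, since forgetting the product gives back X. *)
Lemma xbim_morphE (X X' : xbim_data) (k1 : xb_B X -> xb_B X')
    (k0 : xb_D X -> xb_D X') :
  is_xbim_morph k1 k0 <-> @is_esys_morph (xbim_to_esys X) (xbim_to_esys X') k1 k0.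
Proof.
case: X k1 k0 => B D d l r; case: X' => B' D' d' l' r' k1 k0.
apply: iff_sym; exact: (@esys_morphE (xbim_to_esys (XBimData d l r))
  (xbim_to_esys (XBimData d' l' r')) k1 k0 (xbim_to_esys_mul_via_theta_d _)
  (xbim_to_esys_mul_via_theta_d _)).
Qed.

Theorem mainTheorem2 :
  (* the assignment on objects E |-> X is well defined *)
  (forall E : esys_data, is_regular_esystem E ->
     is_crossed_bimodule (esys_to_xbim E)) /\
  (* the assignment on objects X |-> E is well defined *)
  (forall X : xbim_data, is_crossed_bimodule X ->
     is_regular_esystem (xbim_to_esys X)) /\
  (* mutually inverse on objects *)
  (forall E : esys_data, is_regular_esystem E ->
     xbim_to_esys (esys_to_xbim E) = E) /\
  (forall X : xbim_data, is_crossed_bimodule X ->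
     esys_to_xbim (xbim_to_esys X) = X) /\
  (* identity on morphisms (f1, f0): E-system morphisms are exactly the
     crossed-bimodule morphisms between the corresponding objects, and
     conversely *)
  (forall (E E' : esys_data), is_regular_esystem E -> is_regular_esystem E' ->
     forall (f1 : es_B E -> es_B E') (f0 : es_D E -> es_D E'),
       is_esys_morph f1 f0 <->
       @is_xbim_morph (esys_to_xbim E) (esys_to_xbim E') f1 f0) /\
  (forall (X X' : xbim_data), is_crossed_bimodule X -> is_crossed_bimodule X' ->
     forall (k1 : xb_B X -> xb_B X') (k0 : xb_D X -> xb_D X'),
       is_xbim_morph k1 k0 <->
       @is_esys_morph (xbim_to_esys X) (xbim_to_esys X') k1 k0).
Proof.
split; first exact: esys_to_xbim_crossed.
split; first exact: xbim_to_esys_regular.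
split; first by move=> E [/esystem_mul_via_theta_d thdE _ _]; exact: xbim_to_esysK.
split; first by move=> X _; exact: esys_to_xbimK.
split.
  move=> E E' [/esystem_mul_via_theta_d thdE _ _] [/esystem_mul_via_theta_d thdE' _ _] f1 f0.
  exact: esys_morphE.
move=> X X' _ _ k1 k0; exact: xbim_morphE.
Qed.
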